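(* Let $\mathcal{C}$ and $\mathcal{E}$ be categories with finite limits and small coproducts in which actions of groups by automorphisms are effective, and let $F\colon\mathcal{C}\to\mathcal{E}$ be a functor preserving finite limits. If $F$ preserves strict epimorphisms and coproducts, then $F$ preserves quotients by actions of groups: for every group $H$ acting on an object $X$ of $\mathcal{C}$ with quotient $q\colon X\to X/H$, the arrow $F(q)$ is the quotient of $F(X)$ by the induced action of $H$.
   Context: An arrow $f\colon X\to Y$ is a strict epimorphism if for every $g\colon X\to Z$ compatible with $f$ (for all objects $C$ and $u,v\colon C\to X$, $f\circ u=f\circ v$ implies $g\circ u=g\circ v$) there is a unique $k$ with $g=k\circ f$. For a group $H$ acting on $X$ by automorphisms (homomorphism $H\to\mathrm{Aut}(X)^{op}$) the quotient $q\colon X\to X/H$ is universal among arrows with $q\circ h=q$ for all $h\in H$. Let $X\bullet H=\coprod_{h\in H}X$ with injections $\lambda_h$, $\nabla\colon X\bullet H\to X$ the codiagonal and $\nabla_H\colon X\bullet H\to X$ the arrow with $\nabla_H\circ\lambda_h=h$. The action is effective if the quotient $q$ exists and the induced arrow $(\nabla,\nabla_H)\colon X\bullet H\to R_q$ into the kernel pair $R_q\subseteq X\times X$ of $q$ is a strict epimorphism. *)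

Record Category := {
  Obj :> Type;
  Hom : Obj -> Obj -> Type;
  idm : forall A, Hom A A;
  comp : forall {A B C}, Hom B C -> Hom A B -> Hom A C;
  comp_id_l : forall A B (f : Hom A B), comp (idm B) f = f;
  comp_id_r : forall A B (f : Hom A B), comp f (idm A) = f;
  comp_assoc : forall A B C D (f : Hom A B) (g : Hom B C) (h : Hom C D),
      comp h (comp g f) = comp (comp h g) f
}.
Arguments Hom {C} A B : rename.
Arguments idm {C} A : rename.
Arguments comp {C A B D} g f : rename.
Notation "g ⊚ f" := (comp g f) (at level 40, left associativity).

Record Functor (C D : Category) := {
  Fobj :> C -> D;
  Fmap : forall {A B : C}, Hom A B -> Hom (Fobj A) (Fobj B);
  Fmap_id : forall A : C, Fmap (idm A) = idm (Fobj A);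
  Fmap_comp : forall (A B E : C) (f : Hom A B) (g : Hom B E),
      Fmap (g ⊚ f) = Fmap g ⊚ Fmap f
}.
Arguments Fmap {C D} F {A B} f : rename.

Record Group := {
  carrier :> Type;
  gmul : carrier -> carrier -> carrier;
  gone : carrier;
  ginv : carrier -> carrier;
  gmulA : forall x y z, gmul x (gmul y z) = gmul (gmul x y) z;
  gmul1 : forall x, gmul gone x = x;
  gmulV : forall x, gmul (ginv x) x = gone
}.
Arguments gmul {g} x y : rename.
Arguments gone {g} : rename.

Section Defs.
Context {C : Category}.

Definition is_terminal (T : C) : Prop :=
  forall Z : C, exists! t : Hom Z T, True.

Definition is_pullback {A B Z P : C} (f : Hom A Z) (g : Hom B Z)
  (p1 : Hom P A) (p2 : Hom P B) : Prop :=
  f ⊚ p1 = g ⊚ p2 /\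
  forall (W : C) (w1 : Hom W A) (w2 : Hom W B), f ⊚ w1 = g ⊚ w2 ->
    exists! u : Hom W P, p1 ⊚ u = w1 /\ p2 ⊚ u = w2.

(** Finite limits = terminal object + pullbacks. *)
Definition has_finite_limits : Prop :=
  (exists T : C, is_terminal T) /\
  forall (A B Z : C) (f : Hom A Z) (g : Hom B Z),
    exists (P : C) (p1 : Hom P A) (p2 : Hom P B), is_pullback f g p1 p2.

Definition is_coproduct (I : Type) (A : I -> C) (S : C)
  (inj : forall i, Hom (A i) S) : Prop :=
  forall (Z : C) (f : forall i, Hom (A i) Z),
    exists! k : Hom S Z, forall i, k ⊚ inj i = f i.

Definition has_small_coproducts : Prop :=
  forall (I : Type) (A : I -> C),
    exists (S : C) (inj : forall i, Hom (A i) S), is_coproduct I A S inj.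

Definition strict_epi {X Y : C} (f : Hom X Y) : Prop :=
  forall (Z : C) (g : Hom X Z),
    (forall (W : C) (u v : Hom W X), f ⊚ u = f ⊚ v -> g ⊚ u = g ⊚ v) ->
    exists! k : Hom Y Z, g = k ⊚ f.

(** Group actions by automorphisms: homomorphisms H -> Aut(X)^op. *)
Definition is_action {H : Group} {X : C} (a : H -> Hom X X) : Prop :=
  a gone = idm X /\ forall g h : H, a (gmul g h) = a h ⊚ a g.

Definition is_quotient {H : Group} {X Q : C} (a : H -> Hom X X)
  (q : Hom X Q) : Prop :=
  (forall h, q ⊚ a h = q) /\
  forall (Z : C) (g : Hom X Z), (forall h, g ⊚ a h = g) ->
    exists! k : Hom Q Z, k ⊚ q = g.

(** Effectiveness: the quotient exists and, for any choice of the
    coproduct X•H, of the codiagonal ∇ and of ∇_H, of the kernel pair R_q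
    (a pullback of q along q), the induced arrow (∇,∇_H) : X•H -> R_q is
    a strict epimorphism. *)
Definition action_effective {H : Group} {X : C} (a : H -> Hom X X) : Prop :=
  (exists (Q : C) (q : Hom X Q), is_quotient a q) /\
  forall (Q : C) (q : Hom X Q), is_quotient a q ->
  forall (S : C) (lam : forall h : H, Hom X S),
    is_coproduct (carrier H) (fun _ : H => X) S lam ->
  forall (nab nabH : Hom S X),
    (forall h, nab ⊚ lam h = idm X) ->
    (forall h, nabH ⊚ lam h = a h) ->
  forall (R : C) (p1 p2 : Hom R X), is_pullback q q p1 p2 ->
  forall u : Hom S R, p1 ⊚ u = nab -> p2 ⊚ u = nabH ->
    strict_epi u.

Definition actions_effective : Prop :=
  forall (H : Group) (X : C) (a : H -> Hom X X),
    is_action a -> action_effective a.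

End Defs.
Arguments has_finite_limits C : clear implicits.
Arguments has_small_coproducts C : clear implicits.
Arguments actions_effective C : clear implicits.

Definition preserves_finite_limits {C D : Category} (F : Functor C D) : Prop :=
  (forall T : C, is_terminal T -> is_terminal (F T)) /\
  (forall (A B Z P : C) (f : Hom A Z) (g : Hom B Z) (p1 : Hom P A) (p2 : Hom P B),
     is_pullback f g p1 p2 ->
     is_pullback (Fmap F f) (Fmap F g) (Fmap F p1) (Fmap F p2)).

Definition preserves_strict_epis {C D : Category} (F : Functor C D) : Prop :=
  forall (X Y : C) (f : Hom X Y), strict_epi f -> strict_epi (Fmap F f).

Definition preserves_coproducts {C D : Category} (F : Functor C D) : Prop :=
  forall (I : Type) (A : I -> C) (S : C) (inj : forall i, Hom (A i) S),
    is_coproduct I A S inj ->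
    is_coproduct I (fun i => F (A i)) (F S) (fun i => Fmap F (inj i)).


(* F(q) is a strict epimorphism, so an F(H)-invariant g factors through it
   as soon as g coequalizes the kernel pair F(R_q) of F(q).  By effectiveness
   in C, the arrow u = (∇,∇_H) : X•H -> R_q is a strict epimorphism, hence so
   is F(u); and g ∘ F(p_i) ∘ F(u) are g ∘ F(∇) and g ∘ F(∇_H), which agree on
   every coproduct injection F(λ_h) precisely because g is invariant. *)

Section StrictEpis.
Context {C : Category}.

Definition epic {X Y : C} (f : Hom X Y) : Prop :=
  forall Z (k1 k2 : Hom Y Z), k1 ⊚ f = k2 ⊚ f -> k1 = k2.

Lemma strict_epi_epic {X Y : C} (f : Hom X Y) : strict_epi f -> epic f.
Proof.
  intros f_strict Z k1 k2 E.
  destruct (f_strict Z (k1 ⊚ f)) as [k [_ k_unique]].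
  - intros W u v Huv. rewrite <- !comp_assoc, Huv. reflexivity.
  - transitivity k; [symmetry|]; apply k_unique; [reflexivity | exact E].
Qed.

Lemma strict_epi_factor_kernel_pair {X Y R Z : C} (f : Hom X Y)
    (p1 p2 : Hom R X) (g : Hom X Z) :
  strict_epi f -> is_pullback f f p1 p2 -> g ⊚ p1 = g ⊚ p2 ->
  exists! k : Hom Y Z, k ⊚ f = g.
Proof.
  intros f_strict [_ pb_univ] g_coeq.
  destruct (f_strict Z g) as [k [Hk k_unique]].
  - intros W v w Hvw.
    destruct (pb_univ W v w Hvw) as [m [[Hm1 Hm2] _]].
    rewrite <- Hm1, <- Hm2, !comp_assoc, g_coeq. reflexivity.
  - exists k. split; [symmetry; exact Hk|].
    intros k' Hk'. apply k_unique. symmetry. exact Hk'.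
Qed.

Lemma coproduct_hom_ext (I : Type) (A : I -> C) (S : C)
    (inj : forall i, Hom (A i) S) :
  is_coproduct I A S inj -> forall Z (k1 k2 : Hom S Z),
  (forall i, k1 ⊚ inj i = k2 ⊚ inj i) -> k1 = k2.
Proof.
  intros S_coprod Z k1 k2 E.
  destruct (S_coprod Z (fun i => k2 ⊚ inj i)) as [k [_ k_unique]].
  transitivity k; [symmetry|]; apply k_unique; auto.
Qed.

End StrictEpis.

Section Quotients.
Context {C : Category} {H : Group} {X : C} (a : H -> Hom X X).

Lemma quotient_strict_epi {Q : C} (q : Hom X Q) :
  is_quotient a q -> strict_epi q.
Proof.
  intros [q_inv q_univ] Z g g_compat.
  destruct (q_univ Z g) as [k [Hk k_unique]].
  - intro h. transitivity (g ⊚ idm X); [|apply comp_id_r].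
    apply g_compat. rewrite q_inv, comp_id_r. reflexivity.
  - exists k. split; [symmetry; exact Hk|].
    intros k' Hk'. apply k_unique. symmetry. exact Hk'.
Qed.

Variables (S : C) (lam : forall h : H, Hom X S) (nab nabH : Hom S X).
Hypothesis S_coprod : is_coproduct (carrier H) (fun _ : H => X) S lam.
Hypothesis nab_lam : forall h, nab ⊚ lam h = idm X.
Hypothesis nabH_lam : forall h, nabH ⊚ lam h = a h.

Lemma invariant_coequalizes_codiagonals {Z : C} (g : Hom X Z) :
  (forall h, g ⊚ a h = g) -> g ⊚ nab = g ⊚ nabH.
Proof.
  intro g_inv. apply (coproduct_hom_ext _ _ _ _ S_coprod). intro h.
  rewrite <- !comp_assoc, nab_lam, nabH_lam, comp_id_r, g_inv. reflexivity.
Qed.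

Lemma invariant_coequalizes_kernel_pair {R Z : C} (p1 p2 : Hom R X)
    (u : Hom S R) (g : Hom X Z) :
  epic u -> p1 ⊚ u = nab -> p2 ⊚ u = nabH ->
  (forall h, g ⊚ a h = g) -> g ⊚ p1 = g ⊚ p2.
Proof.
  intros u_epic Hu1 Hu2 g_inv. apply u_epic.
  rewrite <- !comp_assoc, Hu1, Hu2.
  exact (invariant_coequalizes_codiagonals g g_inv).
Qed.

End Quotients.

Theorem proposition5p19 (C E : Category) (F : Functor C E) :
  has_finite_limits C -> has_small_coproducts C -> actions_effective C ->
  has_finite_limits E -> has_small_coproducts E -> actions_effective E ->
  preserves_finite_limits F ->
  preserves_strict_epis F -> preserves_coproducts F ->
  forall (H : Group) (X : C) (a : H -> Hom X X), is_action a ->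
  forall (Q : C) (q : Hom X Q), is_quotient a q ->
    is_quotient (fun h : H => Fmap F (a h)) (Fmap F q).
Proof.
  intros [_ pullbacks] coproducts effective _ _ _ [_ F_pullback] F_strict
    F_coprod H X a a_action Q q q_quot.
  split.
  { intro h. rewrite <- Fmap_comp, (proj1 q_quot). reflexivity. }
  intros Z g g_inv.
  destruct (coproducts (carrier H) (fun _ => X)) as [S [lam S_coprod]].
  destruct (S_coprod X (fun _ => idm X)) as [nab [nab_lam _]].
  destruct (S_coprod X a) as [nabH [nabH_lam _]].
  destruct (pullbacks _ _ _ q q) as [R [p1 [p2 R_pb]]].
  pose proof (invariant_coequalizes_codiagonals a S lam nab nabH S_coprod
                nab_lam nabH_lam q (proj1 q_quot)) as q_coeq.
  destruct (proj2 R_pb S nab nabH q_coeq) as [u [[Hu1 Hu2] _]].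
  pose proof (proj2 (effective H X a a_action) Q q q_quot S lam S_coprod
                nab nabH nab_lam nabH_lam R p1 p2 R_pb u Hu1 Hu2) as u_strict.
  apply (strict_epi_factor_kernel_pair (Fmap F q) (Fmap F p1) (Fmap F p2)).
  - exact (F_strict _ _ q (quotient_strict_epi a q q_quot)).
  - exact (F_pullback _ _ _ _ _ _ _ _ R_pb).
  - apply (invariant_coequalizes_kernel_pair (fun h => Fmap F (a h))
             (F S) (fun h => Fmap F (lam h)) (Fmap F nab) (Fmap F nabH)
             (F_coprod _ _ _ _ S_coprod)) with (u := Fmap F u).
    + intro h. rewrite <- Fmap_comp, nab_lam. apply Fmap_id.
    + intro h. rewrite <- Fmap_comp, nabH_lam. reflexivity.
    + apply strict_epi_epic, F_strict, u_strict.
    + rewrite <- Fmap_comp, Hu1. reflexivity.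
    + rewrite <- Fmap_comp, Hu2. reflexivity.
    + exact g_inv.
Qed.
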